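(* Let $(\Omega,\mathcal F)$ be a measurable space with $\Sigma\neq\emptyset$ (where $\Sigma$ is defined in the context). Let $v:\mathcal F\to\mathbb R$ be a non-decreasing and continuous set function with $v(\emptyset)=0$. Then the following four conditions are equivalent. (a) $v$ is submodular, i.e. $v(A)+v(B)\ge v(A\cup B)+v(A\cap B)$ for all $A,B\in\mathcal F$. (b) For every $\mathcal I\in\Sigma$, the extremal measure $\mu_{v,\mathcal I}$ belongs to $\mathcal C_{-,v}(\Omega)$. (c) $v(A)=\sup_{\mathcal I\in\Sigma}\mu_{v,\mathcal I}(A)$ for all $A\in\mathcal F$. (d) For all $A,B\in\mathcal F$ with $B\subset A$, $v(B)=\sup_{\mu\in\mathcal C_{-,v}(A)}\mu(B)$.
   Context: Let $(\Omega,\mathcal F)$ be a measurable space. $\Sigma$ denotes the set of all classes $\mathcal I\subset\mathcal F$ that are chains (totally ordered by inclusion), contain $\emptyset$ and $\Omega$, and satisfy $\sigma[\mathcal I]=\mathcal F$ (the smallest $\sigma$-algebra containing $\mathcal I$ is $\mathcal F$). A set function $v:\mathcal F\to\mathbb R$ is non-decreasing if $v(A)\le v(B)$ whenever $A\subset B$. For $\mathcal I\in\Sigma$, let $\mathcal J$ be the algebra generated by $\mathcal I$; its elements are exactly the sets $\bigcup_{i=1}^n (C_i\cap D_i^c)$ with $C_1\supset D_1\supset C_2\supset\cdots\supset C_n\supset D_n$, $C_i,D_i\in\mathcal I$. For non-decreasing $v$ define the finitely additive set function $\mu_{v,\mathcal I}$ on $\mathcal J$ by $\mu_{v,\mathcal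 I}(\bigcup_{i=1}^n (C_i\cap D_i^c))=\sum_{i=1}^n (v(C_i)-v(D_i))$ (the unique finitely additive extension of $\mu_{v,\mathcal I}(I)=v(I)$, $I\in\mathcal I$). A non-decreasing $v$ is called continuous if for every $\mathcal I\in\Sigma$ this $\mu_{v,\mathcal I}$ is $\sigma$-additive on $\mathcal J$; then it extends uniquely to a measure on $\mathcal F$, again denoted $\mu_{v,\mathcal I}$ and called the extremal measure of $v$ corresponding to $\mathcal I$. For $A\in\mathcal F$, $\mathcal M(A)$ is the set of finite measures on $(A,\mathcal F|_A)$, and $\mathcal C_{-,v}(A)=\{\mu\in\mathcal M(A)\mid \mu(A)=v(A),\ \mu(B)\le v(B)\text{ for all }B\in\mathcal F,\ B\subset A\}$. *)

From HB Require Import structures.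
From mathcomp Require Import all_boot all_order all_algebra.
From mathcomp Require Import all_classical all_reals all_analysis.
Set Implicit Arguments. Unset Strict Implicit. Unset Printing Implicit Defensive.
Import Order.TTheory GRing.Theory Num.Theory.
Import numFieldNormedType.Exports.
Local Open Scope classical_set_scope.
Local Open Scope ring_scope.

Section Defs.
Context {d : measure_display} {T : measurableType d} {R : realType}.

Definition in_Sigma (I : set (set T)) : Prop :=
  [/\ I `<=` measurable,
      (forall X Y, I X -> I Y -> X `<=` Y \/ Y `<=` X),
      I set0, I setT &
      <<s I >> = measurable].

Definition nondecreasing_sf (v : set T -> R) : Prop :=
  forall A B, measurable A -> measurable B -> A `<=` B -> v A <= v B.

(* A = \bigcup_{i<n} (C_i \cap D_i^c) with C_0 ⊇ D_0 ⊇ C_1 ⊇ ... ⊇ C_{n-1} ⊇ D_{n-1},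
   C_i, D_i \in I  (indices shifted to start at 0) *)
Definition J_rep (I : set (set T)) (A : set T) (n : nat) (C D : nat -> set T) : Prop :=
  [/\ (forall i, (i < n)%N -> I (C i) /\ I (D i)),
      (forall i, (i < n)%N -> D i `<=` C i),
      (forall i, (i.+1 < n)%N -> C i.+1 `<=` D i) &
      A = \bigcup_(i < n) (C i `&` ~` D i)].

Definition J_alg (I : set (set T)) : set (set T) :=
  [set A | exists n C D, J_rep I A n C D].

(* mu_{v,I} on J : value given by (any) representation *)
Definition mu_J (v : set T -> R) (I : set (set T)) (A : set T) : R :=
  xget 0 [set x | exists n C D, J_rep I A n C D /\
                    x = \sum_(i < n) (v (C i) - v (D i))].

Definition continuous_sf (v : set T -> R) : Prop :=
  forall I, in_Sigma I ->
  forall F : nat -> set T, (forall k, J_alg I (F k)) -> trivIset setT F ->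
    J_alg I (\bigcup_k F k) ->
    (fun n => \sum_(k < n) mu_J v I (F k)) @ \oo --> mu_J v I (\bigcup_k F k).

Definition extremal_measure (v : set T -> R) (I : set (set T))
  (mu : {measure set T -> \bar R}) : Prop :=
  forall A, J_alg I A -> mu A = (mu_J v I A)%:E.

(* C_{-,v}(A); a finite measure on (A, F|_A) is represented by a measure on T
   vanishing outside A *)
Definition core_minus (v : set T -> R) (A : set T) : set {measure set T -> \bar R} :=
  [set mu | [/\ mu (~` A) = 0%E, mu A = (v A)%:E &
           forall B, measurable B -> B `<=` A -> (mu B <= (v B)%:E)%E]].

Definition submodular_sf (v : set T -> R) : Prop :=
  forall A B, measurable A -> measurable B ->
    v (A `|` B) + v (A `&` B) <= v A + v B.

End Defs.

From HB Require Import structures.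
From mathcomp Require Import all_boot all_order all_algebra.
From mathcomp Require Import all_classical all_reals all_analysis.
From mathcomp Require Import lra.
Set Implicit Arguments. Unset Strict Implicit. Unset Printing Implicit Defensive.
Import Order.TTheory GRing.Theory Num.Theory.
Import numFieldNormedType.Exports.
Local Open Scope classical_set_scope.
Local Open Scope ring_scope.

(* Fix a chain I in Sigma.  On the I-intervals C \ D (D <= C in I) the
   extremal measure is v C - v D whatever the representation, continuity of v
   makes this sigma-additive, and the Caratheodory extension is the unique
   extremal measure mu_{v,I}; it is outer regular with respect to countable
   unions of I-intervals.

   The heart is (a) => (b).  If W is an I-interval from which finitely many
   I-intervals have been removed and Z in I is disjoint from W, then
   mu(W) <= v(W u Z) - v(Z): split W along the last removed interval P \ Q
   into its parts outside P and inside Q; one application of submodularity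
   to W u Z and Q glues the bounds for the two parts.  Hence mu <= v on
   complements of finite unions of intervals.  Continuity of v along
   decreasing sequences (merge the sequence into a chain of Sigma) passes
   this to complements of countable unions, and outer regularity
   approximates any B from inside by such sets.

   The other implications rest on the fact that any three nested measurable
   sets lie in one chain of Sigma, on which mu_{v,I} agrees with v; then
   mu(A u B) + mu(A n B) = mu(A) + mu(B) turns (b), (c) or (d) back into
   submodularity. *)

Section chain_intervals.
Context {d : measure_display} {T : measurableType d} {R : realType}.
Implicit Types (I : set (set T)) (v : set T -> R).

Definition chain I := forall X Y, I X -> I Y -> X `<=` Y \/ Y `<=` X.

Lemma chain_setI I X Y : chain I -> I X -> I Y -> I (X `&` Y).
Proof. by move=> ch IX IY; case: (ch X Y IX IY) => XY; rewrite ?(setIidl XY) ?(setIidr XY). Qed.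

Lemma chain_setU I X Y : chain I -> I X -> I Y -> I (X `|` Y).
Proof. by move=> ch IX IY; case: (ch X Y IX IY) => XY; rewrite ?(setUidl XY) ?(setUidr XY). Qed.

Lemma chain_subset_diff I X Y x : chain I -> I X -> I Y -> X x -> ~ Y x -> Y `<=` X.
Proof. by move=> ch IX IY Xx nYx; case: (ch X Y IX IY) => // /(_ x Xx). Qed.

Lemma J_rep_nested I A n C D i j : J_rep I A n C D ->
  (i < j)%N -> (j < n)%N -> C j `<=` D i.
Proof.
move=> [_ DC CD _]; elim: j => // j IH; rewrite ltnS leq_eqVlt => /orP[/eqP-> //|ij] jn.
  exact: CD.
by apply: subset_trans (CD _ jn) (subset_trans (DC _ (ltnW jn)) (IH ij (ltnW jn))).
Qed.

Lemma bigcup_ord_recr (F : nat -> set T) n :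
  \bigcup_(i < n.+1) F i = \bigcup_(i < n) F i `|` F n.
Proof. by rewrite !bigcup_mkord big_ord_recr. Qed.

Lemma J_rep_recr I A n C D : J_rep I A n.+1 C D ->
  [/\ J_rep I (\bigcup_(i < n) (C i `&` ~` D i)) n C D,
      A = \bigcup_(i < n) (C i `&` ~` D i) `|` (C n `\` D n) &
      \bigcup_(i < n) (C i `&` ~` D i) `&` C n = set0].
Proof.
move=> rep; have [ICD DC CD ->] := rep; split.
- by split => // i ilt; [apply: ICD|apply: DC|apply: CD]; rewrite ltnW.
- exact: bigcup_ord_recr.
- apply/seteqP; split => // x [[i /= ilt [_ nDi]] Cnx]; apply: nDi.
  exact: J_rep_nested rep ilt (ltnSn n) _ Cnx.
Qed.

Lemma chain_interval_split I C0 D0 A C D x : chain I ->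
  I C0 -> I D0 -> I C -> I D -> D `<=` C ->
  C0 `\` D0 = A `|` (C `\` D) -> A `&` C = set0 -> (C `\` D) x ->
  [/\ D = D0, C `<=` C0 & A = C0 `\` C].
Proof.
move=> ch IC0 ID0 IC ID DC E AC0 [Cx nDx].
have CD_sub : C `\` D `<=` C0 `\` D0 by rewrite E; exact: subsetUr.
have A_sub : A `<=` C0 `\` D0 by rewrite E; exact: subsetUl.
have [C0x nD0x] := CD_sub x (conj Cx nDx).
have D0C : D0 `<=` C := chain_subset_diff ch IC ID0 Cx nD0x.
have DC0 : D `<=` C0 := chain_subset_diff ch IC0 ID C0x nDx.
have AnC y : A y -> ~ C y by move=> Ay Cy; have : (A `&` C) y by []; rewrite AC0.
have DD0 : D = D0.
  apply/seteqP; split => y Dy; apply/not_notP => nD.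
    have : (C0 `\` D0) y by split => //; exact: DC0.
    by rewrite E => -[/AnC/(_ (DC _ Dy))|[]].
  exact: (CD_sub y (conj (D0C _ Dy) nD)).2 Dy.
split => //.
  move=> y Cy; have [/DC0 //|nDy] := pselect (D y).
  exact: (CD_sub y (conj Cy nDy)).1.
apply/seteqP; split => y.
  by move=> Ay; split; [exact: (A_sub _ Ay).1|exact: AnC].
move=> [C0y nCy]; have : (C0 `\` D0) y by split => // /D0C.
by rewrite E => -[//|[]].
Qed.

Lemma J_rep_sum_setD v I n C D C0 D0 : chain I ->
  I C0 -> I D0 -> D0 `<=` C0 -> J_rep I (C0 `\` D0) n C D ->
  \sum_(i < n) (v (C i) - v (D i)) = v C0 - v D0.
Proof.
move=> ch; elim: n C0 D0 => [|n IH] C0 D0 IC0 ID0 D0C0 rep.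
  have [_ _ _ E] := rep; rewrite big_ord0.
  suff -> : C0 = D0 by rewrite subrr.
  apply/seteqP; split => // x C0x; apply/not_notP => nD0x.
  by have : (C0 `\` D0) x by []; rewrite E => -[].
have [rep' E disj] := J_rep_recr rep.
have [ICD DC _ _] := rep; have [ICn IDn] := ICD n (ltnSn n).
rewrite big_ord_recr /=.
have [CnDn|/existsNP[x /not_implyP[Cnx nDnx]]] := pselect (C n `<=` D n).
  have -> : v (C n) = v (D n) by congr v; apply/seteqP; split => //; exact: DC.
  rewrite subrr addr0; apply: IH => //; rewrite E.
  suff -> : C n `\` D n = set0 by rewrite setU0.
  by apply/seteqP; split => // y [/CnDn].
have [DnD0 CnC0 A'E] :=
  chain_interval_split ch IC0 ID0 ICn IDn (DC _ (ltnSn n)) E disj (conj Cnx nDnx).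
by rewrite (IH C0 (C n)) -?A'E // DnD0 addrA subrK.
Qed.

Lemma J_alg_setD I C D : chain I -> I C -> I D -> J_alg I (C `\` D).
Proof.
move=> ch IC ID; exists 1%N, (fun=> C), (fun=> C `&` D); split.
- by move=> i _; split => //; exact: chain_setI.
- by move=> i _; exact: subIsetl.
- by move=> i; rewrite ltnS ltn0.
- apply/seteqP; split => x.
    by move=> [Cx nDx]; exists 0%N => //; split => // -[].
  by move=> [i _ [Cx nCDx]]; split => // Dx; apply: nCDx.
Qed.

Lemma mu_J_eq v I A r : J_alg I A ->
  (forall n C D, J_rep I A n C D -> \sum_(i < n) (v (C i) - v (D i)) = r) ->
  mu_J v I A = r.
Proof.
move=> [n [C [D rep]]] sumE; rewrite /mu_J; set P := [set x | _].
have [m [C' [D' [rep' ->]]]] : P (xget 0 P).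
  by apply: (@xgetI _ _ _ r); exists n, C, D; rewrite sumE.
exact: sumE rep'.
Qed.

Lemma mu_J_setD v I C D : chain I -> I C -> I D -> D `<=` C ->
  mu_J v I (C `\` D) = v C - v D.
Proof.
move=> ch IC ID DC; apply: mu_J_eq; first exact: J_alg_setD.
by move=> n C' D' rep; exact: J_rep_sum_setD rep.
Qed.

Lemma setD_setI (C D : set T) : C `\` D = C `\` (C `&` D).
Proof. by rewrite setDIr setDv set0U. Qed.

Lemma mu_J_setD_setI v I C D : chain I -> I C -> I D ->
  mu_J v I (C `\` D) = v C - v (C `&` D).
Proof.
by move=> ch IC ID; rewrite setD_setI mu_J_setD //; exact: chain_setI.
Qed.

Variables (v : set T -> R) (I : set (set T)) (mu : {measure set T -> \bar R}).
Hypotheses (ch : chain I) (ext : extremal_measure v I mu).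

Lemma extremal_setD C D : I C -> I D -> D `<=` C ->
  mu (C `\` D) = (v C - v D)%:E.
Proof.
by move=> IC ID DC; rewrite ext ?mu_J_setD //; exact: J_alg_setD.
Qed.

Lemma extremal_chainE C : I set0 -> v set0 = 0 -> I C -> mu C = (v C)%:E.
Proof. by move=> I0 v0 IC; rewrite -{1}[C]setD0 extremal_setD // v0 subr0. Qed.

End chain_intervals.

Section J_measure.
Context {d : measure_display} {T : measurableType d} {R : realType}.
Variables (v : set T -> R) (I : set (set T)) (mu : {measure set T -> \bar R}).
Hypothesis mI : I `<=` measurable.

Lemma J_rep_measurable A n C D : J_rep I A n C D -> measurable A.
Proof.
move=> [ICD _ _ ->]; rewrite bigcup_mkord; apply: bigsetU_measurable => i _.
by have [/mI mC /mI mD] := ICD i (ltn_ord i); apply: measurableI => //; exact: measurableC.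
Qed.

Lemma measure_J_rep A n C D :
  (forall C D, I C -> I D -> D `<=` C -> mu (C `\` D) = (v C - v D)%:E) ->
  J_rep I A n C D -> mu A = (\sum_(i < n) (v (C i) - v (D i)))%:E.
Proof.
move=> mu_ivl; elim: n A => [|n IH] A rep.
  by have [_ _ _ ->] := rep; rewrite bigcup_mkord !big_ord0 measure0.
have [rep' -> disj] := J_rep_recr rep; have [ICD DC _ _] := rep.
have [ICn IDn] := ICD n (ltnSn n).
rewrite measureU.
- by rewrite big_ord_recr EFinD -(IH _ rep') -mu_ivl //; exact: DC.
- exact: J_rep_measurable rep'.
- by apply: measurableD; exact: mI.
- by apply/seteqP; split => // x [A'x [Cnx _]]; rewrite -disj.
Qed.

End J_measure.

(* Packing the chain with its proof lets its intervals be the canonical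
   semiring of sets on the alias [interval_type c]. *)
Record Sigma_chain {d : measure_display} (T : measurableType d) := SigmaChain {
  chain_sets : set (set T);
  chain_setsP : in_Sigma chain_sets }.

Definition interval_type {d : measure_display} {T : measurableType d}
  (c : Sigma_chain T) : Type := T.

Section chain_semiring.
Context {d : measure_display} {T : measurableType d} (c : Sigma_chain T).
Local Notation I := (chain_sets c).

Lemma chain_sets_measurable : I `<=` measurable.
Proof. by case: (chain_setsP c). Qed.

Lemma chain_sets_chain : chain I.
Proof. by case: (chain_setsP c). Qed.

Lemma chain_sets0 : I set0.
Proof. by case: (chain_setsP c). Qed.

Lemma chain_setsT : I setT.
Proof. by case: (chain_setsP c). Qed.

Definition chain_interval : set (set T) := [set C `\` D | C in I & D in I].

Lemma chain_interval0 : chain_interval set0.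
Proof. by exists set0; [exact: chain_sets0|exists set0; [exact: chain_sets0|rewrite setDv]]. Qed.

Lemma chain_intervalI : setI_closed chain_interval.
Proof.
have ch := chain_sets_chain.
move=> _ _ [C IC [D ID <-]] [C' IC' [D' ID' <-]].
exists (C `&` C'); first exact: chain_setI.
exists (D `|` D'); first exact: chain_setU.
by rewrite !setDE setCU setIACA.
Qed.

Lemma chain_intervalD : semi_setD_closed chain_interval.
Proof.
have ch := chain_sets_chain.
move=> _ _ [C IC [D ID <-]] [C' IC' [D' ID' <-]].
exists [set C `\` (D `|` C'); (C `&` (C' `&` D')) `\` D]; split.
- exact: finite_set2.
- move=> _ [->|->].
    by exists C => //; exists (D `|` C') => //; exact: chain_setU.
  exists (C `&` (C' `&` D')); last by exists D.
  by apply: chain_setI => //; exact: chain_setI.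
- rewrite bigcup_setU !bigcup_set1; apply/seteqP; split => x.
    move=> [[Cx nDx] nC'D'x]; have [C'x|nC'x] := pselect (C' x).
      by right; split => //; split => //; split => //; apply/not_notP => nD'x; apply: nC'D'x.
    by left; split => // -[].
  move=> [[Cx nDC'x]|[[Cx [C'x D'x]] nDx]].
    by split; [split => // Dx; apply: nDC'x; left|move=> [C'x _]; apply: nDC'x; right].
  by split => // -[].
- move=> X Y [->|->] [->|->] // [x [Xx Yx]]; exfalso.
    by move: Xx Yx => [_ nDC'x] [[_ [C'x _]] _]; apply: nDC'x; right.
  by move: Yx Xx => [_ nDC'x] [[_ [C'x _]] _]; apply: nDC'x; right.
Qed.

End chain_semiring.

HB.instance Definition _ {d : measure_display} {T : measurableType d} (c : Sigma_chain T) :=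
  Pointed.on (interval_type c).
HB.instance Definition _ {d : measure_display} {T : measurableType d} (c : Sigma_chain T) :=
  @isSemiRingOfSets.Build default_measure_display (interval_type c) (chain_interval c)
    (chain_interval0 c) (@chain_intervalI _ _ c) (@chain_intervalD _ _ c).

Section extremal_construction.
Context {d : measure_display} {T : measurableType d} {R : realType}.
Variables (v : set T -> R) (c : Sigma_chain T).
Hypotheses (mono : nondecreasing_sf v) (cont : continuous_sf v) (v0 : v set0 = 0).
Local Notation I := (chain_sets c).
Let ch : chain I := chain_sets_chain (c := c).
Let mI : I `<=` measurable := chain_sets_measurable (c := c).

Lemma chain_interval_J X : chain_interval c X -> J_alg I X.
Proof. by move=> [C IC [D ID <-]]; exact: J_alg_setD. Qed.

Lemma chain_interval_measurable X : chain_interval c X -> measurable X.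
Proof. by move=> [C /mI mC [D /mI mD <-]]; exact: measurableD. Qed.

(* The absolute value only matters off the intervals, where the value is irrelevant. *)
Definition extremal_premeasure (X : set (interval_type c)) : \bar R :=
  (`|mu_J v I X|)%:E.

Lemma extremal_premeasure_interval X : chain_interval c X ->
  extremal_premeasure X = (mu_J v I X)%:E.
Proof.
move=> [C IC [D ID <-]]; rewrite /extremal_premeasure mu_J_setD_setI //.
rewrite ger0_norm // subr_ge0; apply: mono; [|exact: mI|exact: subIsetl].
by apply: measurableI; exact: mI.
Qed.

Lemma extremal_premeasure0 : extremal_premeasure set0 = 0%E.
Proof.
have I0 : I set0 := chain_sets0 c.
by rewrite /extremal_premeasure -(setDv set0) mu_J_setD ?subrr ?normr0.
Qed.

Lemma extremal_premeasure_ge0 X : (0 <= extremal_premeasure X)%E.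
Proof. by rewrite lee_fin. Qed.

Lemma extremal_premeasure_sigma_additive : semi_sigma_additive extremal_premeasure.
Proof.
move=> F mF tF mU; rewrite extremal_premeasure_interval //.
rewrite (_ : (fun n => _) = fun n => (\sum_(k < n) mu_J v I (F k))%:E); last first.
  apply/funext => n; rewrite big_mkord -sumEFin; apply: eq_bigr => k _.
  exact: extremal_premeasure_interval (mF k).
apply: cvg_EFin; first by apply: nearW.
exact: cont (chain_setsP c) _ (fun k => chain_interval_J (mF k)) tF (chain_interval_J mU).
Qed.

HB.instance Definition _ := isMeasure.Build _ (interval_type c) R extremal_premeasure
  extremal_premeasure0 extremal_premeasure_ge0 extremal_premeasure_sigma_additive.

Lemma measurable_chain_interval : @measurable _ T = <<s chain_interval c>>.
Proof.
have [_ _ _ _ gen] := chain_setsP c; apply/seteqP; split.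
  rewrite -gen; apply: smallest_sub; first exact: smallest_sigma_algebra.
  move=> C IC; apply: sub_sigma_algebra; exists C => //; exists set0; last exact: setD0.
  exact: chain_sets0.
apply: smallest_sub; first exact: sigma_algebra_measurable.
exact: chain_interval_measurable.
Qed.

Definition extremal_ext : set T -> \bar R := mu_ext extremal_premeasure.

Let extension := measure_extension extremal_premeasure.

Lemma extremal_ext0 : extremal_ext set0 = 0%E.
Proof. exact: (measure0 extension). Qed.

Lemma extremal_ext_ge0 X : (0 <= extremal_ext X)%E.
Proof. exact: (measure_ge0 extension). Qed.

Lemma extremal_ext_sigma_additive : semi_sigma_additive extremal_ext.
Proof.
move=> F mF tF mU; rewrite measurable_chain_interval in mF mU.
exact: (measure_semi_sigma_additive (s := extension) F mF tF mU).
Qed.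

HB.instance Definition _ := isMeasure.Build _ T R extremal_ext
  extremal_ext0 extremal_ext_ge0 extremal_ext_sigma_additive.

Lemma extremal_ext_interval X : chain_interval c X ->
  extremal_ext X = (mu_J v I X)%:E.
Proof.
by move=> iX; rewrite /extremal_ext measurable_mu_extE //; exact: extremal_premeasure_interval.
Qed.

Lemma extremal_extP : extremal_measure v I extremal_ext.
Proof.
have ext_ivl C D : I C -> I D -> D `<=` C -> extremal_ext (C `\` D) = (v C - v D)%:E.
  move=> IC ID DC; rewrite extremal_ext_interval ?mu_J_setD //.
  by exists C => //; exists D.
move=> A [n [C [D rep]]]; rewrite (measure_J_rep mI ext_ivl rep).
congr EFin; apply/esym/mu_J_eq; first by exists n, C, D.
move=> m C' D' rep'; apply/EFin_inj.
by rewrite -(measure_J_rep mI ext_ivl rep') (measure_J_rep mI ext_ivl rep).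
Qed.

Lemma extremal_exists : exists mu : {measure set T -> \bar R}, extremal_measure v I mu.
Proof. by exists extremal_ext; exact: extremal_extP. Qed.

Variable mu : {measure set T -> \bar R}.
Hypothesis ext : extremal_measure v I mu.

Lemma extremal_setT : mu setT = (v setT)%:E.
Proof. exact: (extremal_chainE ch ext (chain_sets0 c) v0 (chain_setsT c)). Qed.

Lemma extremal_lty X : measurable X -> (mu X < +oo)%E.
Proof.
move=> mX; apply: (le_lt_trans (y := mu setT)); last by rewrite extremal_setT ltry.
by apply: le_measure; rewrite ?inE.
Qed.

Lemma extremal_unique X : measurable X -> mu X = extremal_ext X.
Proof.
apply: (measure_unique (chain_interval c) (fun=> setT) measurable_chain_interval
  (@chain_intervalI _ _ c)).
- by move=> _; exists setT; [exact: chain_setsT|exists set0; [exact: chain_sets0|exact: setD0]].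
- by rewrite bigcup_const //; exists 0%N.
- move=> _ [C IC [D ID <-]]; apply/esym/(eq_trans (extremal_ext_interval _)).
    by exists C => //; exists D.
  by rewrite mu_J_setD_setI // setD_setI (extremal_setD ch ext) //; exact: chain_setI.
- by move=> _; exact: extremal_lty.
Qed.

Lemma extremal_outer_regular X e : measurable X -> 0 < e ->
  exists A : nat -> set T, [/\ forall k, chain_interval c (A k),
    X `<=` \bigcup_k A k & (mu (\bigcup_k A k) < mu X + e%:E)%E].
Proof.
move=> mX e0; have : extremal_ext X \is a fin_num.
  by rewrite -extremal_unique // ge0_fin_numE ?extremal_lty.
move=> /(lb_ereal_inf_adherent e0) [_ [A [ivlA XA] <-]] sumA.
have mA k : measurable (A k : set T) by exact: chain_interval_measurable (ivlA k).
exists A; split => //; rewrite [mu X]extremal_unique //; apply: (le_lt_trans _ sumA).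
apply: le_trans (measure_sigma_subadditive mu mA _ _) _ => //.
  exact: bigcupT_measurable.
apply: lee_nneseries => // k _.
by rewrite extremal_unique // /extremal_ext measurable_mu_extE.
Qed.

End extremal_construction.

Section decreasing_sequence.
Context {d : measure_display} {T : measurableType d}.
Variable K : nat -> set T.
Hypothesis K_dec : forall n, K n.+1 `<=` K n.

Lemma decreasing_sub m n : (m <= n)%N -> K n `<=` K m.
Proof.
elim: n => [|n IH]; first by rewrite leqn0 => /eqP ->.
rewrite leq_eqVlt => /orP[/eqP -> //|]; rewrite ltnS => mn.
by move=> x /K_dec /(IH mn).
Qed.

Lemma decreasing_gap x : K 0%N x -> ~ (\bigcap_n K n) x ->
  exists n, K n x /\ ~ K n.+1 x.
Proof.
move=> K0x nKx; apply: contrapT => nogap; apply: nKx => n _.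
elim: n => [//|n IH]; apply: contrapT => nKn; apply: nogap; by exists n.
Qed.

Lemma decreasing_diff_trivIset : trivIset setT (fun n => K n `\` K n.+1).
Proof.
apply/trivIsetP => i j _ _ ij.
wlog lt_ij : i j ij / (i < j)%N.
  move=> wlog_ij; case: (ltngtP i j) => [lt_ij|lt_ji|eq_ij].
  - exact: wlog_ij.
  - by rewrite setIC; apply: wlog_ij => //; rewrite eq_sym.
  - by rewrite eq_ij eqxx in ij.
apply/seteqP; split => // x [[_ nKi1x] [Kjx _]]; apply: nKi1x.
exact: decreasing_sub lt_ij _ Kjx.
Qed.

Lemma bigcup_decreasing_diff :
  \bigcup_n (K n `\` K n.+1) = K 0%N `\` \bigcap_n K n.
Proof.
apply/seteqP; split => x.
  move=> [n _ [Knx nKn1x]]; split; first exact: decreasing_sub (leq0n n) _ Knx.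
  by move=> Kx; apply: nKn1x; apply: Kx.
by move=> [K0x /(decreasing_gap K0x) [n []]]; exists n.
Qed.

End decreasing_sequence.

Section merged_chain.
Context {d : measure_display} {T : measurableType d}.
Variables (I0 : set (set T)) (K : nat -> set T).
Hypotheses (I0S : in_Sigma I0) (mK : forall n, measurable (K n))
  (K_dec : forall n, K n.+1 `<=` K n) (K0 : K 0%N = setT).

(* Omega is cut into the layers [K n `\` K n.+1] and [\bigcap_n K n]; each layer
   carries its own copy of [I0], stacked on top of the deeper layers. *)
Definition merged_chain : set (set T) :=
  [set X | (exists2 I, I0 I & X = I `&` \bigcap_n K n) \/
           exists n, exists2 I, I0 I & X = K n.+1 `|` (I `&` K n)].

Lemma merged_chain_K n : merged_chain (K n).
Proof.
have [_ _ _ I0T _] := I0S.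
by right; exists n, setT => //; rewrite setTI setUidr.
Qed.

Lemma merged_chain_bigcap : merged_chain (\bigcap_n K n).
Proof. by have [_ _ _ I0T _] := I0S; left; exists setT; rewrite ?setTI. Qed.

Lemma merged_chain_chain : chain merged_chain.
Proof.
have [_ ch0 _ _ _] := I0S.
have layer_sub n m I J : (n < m)%N ->
    K m.+1 `|` (J `&` K m) `<=` K n.+1 `|` (I `&` K n).
  by move=> nm x Xx; left; apply: (decreasing_sub K_dec nm); case: Xx => [/K_dec|[]].
move=> _ _ [[I I0I ->]|[n [I I0I ->]]] [[J I0J ->]|[m [J I0J ->]]].
- by case: (ch0 I J I0I I0J) => IJ; [left|right]; apply: setSI.
- by left => x [_ Kx]; left; exact: Kx.
- by right => x [_ Kx]; left; exact: Kx.
case: (ltngtP n m) => [nm|mn|<-]; [right|left|].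
- exact: layer_sub.
- exact: layer_sub.
- by case: (ch0 I J I0I I0J) => IJ; [left|right]; apply: setUS; apply: setSI.
Qed.

Lemma merged_chain_measurable : merged_chain `<=` measurable.
Proof.
have [mI0 _ _ _ _] := I0S.
move=> _ [[I /mI0 mI ->]|[n [I /mI0 mI ->]]].
  by apply: measurableI => //; exact: bigcapT_measurable.
by apply: measurableU => //; exact: measurableI.
Qed.

Lemma merged_chain_decomposition I : I =
  (I `&` \bigcap_n K n) `|` \bigcup_n ((K n.+1 `|` (I `&` K n)) `\` K n.+1).
Proof.
apply/seteqP; split => [x Ix|x [[]//|[n _ [[//|[]//]]]]].
have [Kx|nKx] := pselect ((\bigcap_n K n) x); [by left|right].
have K0x : K 0%N x by rewrite K0.
have [n [Knx nKn1x]] := decreasing_gap K0x nKx.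
by exists n => //; split => //; right.
Qed.

Lemma merged_chain_Sigma : in_Sigma merged_chain.
Proof.
have [_ _ I00 I0T gen0] := I0S.
split.
- exact: merged_chain_measurable.
- exact: merged_chain_chain.
- by left; exists set0; rewrite ?set0I.
- by right; exists 0%N, setT; rewrite // setTI K0 setUT.
apply/seteqP; split.
  by apply: smallest_sub; [exact: sigma_algebra_measurable|exact: merged_chain_measurable].
rewrite -gen0; apply: smallest_sub; first exact: smallest_sigma_algebra.
move=> I I0I; pose M := g_sigma_algebraType merged_chain.
have mM X : merged_chain X -> measurable (X : set M) by move=> ?; exact: sub_sigma_algebra.
change (measurable (I : set M)); rewrite (merged_chain_decomposition I).
apply: measurableU; first by apply: mM; left; exists I.
apply: bigcupT_measurable => n; apply: measurableD; apply: mM.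
  by right; exists n, I.
exact: merged_chain_K.
Qed.

End merged_chain.

Lemma Sigma_decreasing {d : measure_display} {T : measurableType d}
    (K : nat -> set T) : (exists I : set (set T), in_Sigma I) ->
  (forall n, measurable (K n)) -> (forall n, K n.+1 `<=` K n) ->
  exists I, [/\ in_Sigma I, forall n, I (K n) & I (\bigcap_n K n)].
Proof.
move=> [I0 I0S] mK K_dec; pose K' n := if n is m.+1 then K m else setT.
have mK' n : measurable (K' n) by case: n => [|n]; [exact: measurableT|exact: mK].
have K'_dec n : K' n.+1 `<=` K' n by case: n.
have K'_bigcap : \bigcap_n K' n = \bigcap_n K n.
  apply/seteqP; split=> [x K'x n _|x Kx [//|n] _]; [exact: K'x n.+1 I|exact: Kx].
exists (merged_chain I0 K'); split.
- exact: merged_chain_Sigma.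
- by move=> n; exact: (merged_chain_K I0S K'_dec (n.+1)).
- by rewrite -K'_bigcap; exact: merged_chain_bigcap.
Qed.

Lemma continuous_sf_decreasing {d : measure_display} {T : measurableType d}
    {R : realType} (v : set T -> R) (K : nat -> set T) :
  (exists I : set (set T), in_Sigma I) -> continuous_sf v ->
  (forall n, measurable (K n)) -> (forall n, K n.+1 `<=` K n) ->
  (fun n => v (K n)) @ \oo --> v (\bigcap_n K n).
Proof.
move=> hS cont mK K_dec; have [I [IS IK IKinf]] := Sigma_decreasing hS mK K_dec.
have [_ ch _ _ _] := IS.
have J_layer n : J_alg I (K n `\` K n.+1) by exact: J_alg_setD.
have Kinf_sub : \bigcap_n K n `<=` K 0%N by move=> x; apply.
have := cont I IS _ J_layer (decreasing_diff_trivIset K_dec).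
rewrite bigcup_decreasing_diff // => /(_ (J_alg_setD ch (IK 0%N) IKinf)).
rewrite mu_J_setD //.
have partial_sums n : \sum_(k < n) mu_J v I (K k `\` K k.+1) = v (K 0%N) - v (K n).
  elim: n => [|n IH]; first by rewrite big_ord0 subrr.
  by rewrite big_ord_recr /= IH mu_J_setD // addrA subrK.
rewrite (_ : (fun n => _) = fun n => v (K 0%N) - v (K n)); last exact/funext/partial_sums.
by move=> /(cvgB (cvg_cst (v (K 0%N)))); rewrite !subKr.
Qed.

Section removed_intervals.
Context {d : measure_display} {T : measurableType d} {R : realType}.
Variables (v : set T -> R) (I : set (set T)) (mu : {measure set T -> \bar R}).
Hypotheses (sub : submodular_sf v) (ch : chain I) (mI : I `<=` measurable)
  (ext : extremal_measure v I mu).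
Variables (P Q : nat -> set T).
Hypotheses (IP : forall k, I (P k)) (IQ : forall k, I (Q k))
  (QP : forall k, Q k `<=` P k).

Definition remove_intervals m C D := (C `\` D) `\` \bigcup_(k < m) (P k `\` Q k).

Lemma remove_intervalsE m C D x : remove_intervals m C D x <->
  [/\ C x, ~ D x & forall k, (k < m)%N -> P k x -> Q k x].
Proof.
split.
  move=> [[Cx nDx] nPQx]; split => // k km Pkx; apply: contrapT => nQkx.
  by apply: nPQx; exists k.
by move=> [Cx nDx PQx]; split => // -[k /= km [Pkx]]; apply; exact: PQx.
Qed.

Lemma remove_intervals_subS m C D : remove_intervals m.+1 C D `<=` remove_intervals m C D.
Proof.
move=> x /remove_intervalsE [Cx nDx PQx]; apply/remove_intervalsE.
by split => // k /ltnW /PQx.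
Qed.

Lemma bigcap_remove_intervals C D :
  \bigcap_m remove_intervals m C D = (C `\` D) `\` \bigcup_k (P k `\` Q k).
Proof.
apply/seteqP; split => [x Wx|x [CDx nPQx] m _]; last first.
  by split => // -[k _ PQkx]; apply: nPQx; exists k.
split; first by have [] := Wx 0%N Logic.I.
move=> [k _ [Pkx]]; apply.
by have /remove_intervalsE [_ _] := Wx k.+1 Logic.I; apply.
Qed.

Lemma remove_intervals_measurable m C D : I C -> I D ->
  measurable (remove_intervals m C D).
Proof.
move=> /mI mC /mI mD; apply: measurableD; first exact: measurableD.
by apply: bigcup_measurable => k _; apply: measurableD; exact: mI.
Qed.

Lemma remove_intervals0 C D : remove_intervals 0 C D = C `\` D.
Proof. by rewrite /remove_intervals bigcup_mkord big_ord0 setD0. Qed.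

Lemma remove_intervalsS m C D : remove_intervals m.+1 C D =
  remove_intervals m C (D `|` P m) `|` remove_intervals m (C `&` Q m) D.
Proof.
apply/seteqP; split => x.
  move=> /remove_intervalsE [Cx nDx PQx]; have [Qmx|nQmx] := pselect (Q m x).
    by right; apply/remove_intervalsE; split => // k /ltnW; exact: PQx.
  left; apply/remove_intervalsE; split => //; last by move=> k /ltnW; exact: PQx.
  by move=> [//|/(PQx m (ltnSn m))].
move=> [|] /remove_intervalsE.
  move=> [Cx nDPx PQx]; apply/remove_intervalsE; split => [//| Dx|k].
    by apply: nDPx; left.
  by rewrite ltnS leq_eqVlt => /orP[/eqP -> Pmx|/PQx //]; case: nDPx; right.
move=> [[Cx Qmx] nDx PQx]; apply/remove_intervalsE; split => // k.
by rewrite ltnS leq_eqVlt => /orP[/eqP -> //|/PQx].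
Qed.

Lemma setD_submodular_bound C D Z : I C -> I D -> I Z ->
  (C `\` D) `&` Z = set0 -> (mu (C `\` D) <= (v ((C `\` D) `|` Z) - v Z)%:E)%E.
Proof.
move=> IC ID IZ CDZ.
have [CD0|/set0P [w [Cw nDw]]] := eqVneq (C `\` D) set0.
  by rewrite CD0 measure0 set0U subrr.
have DC : D `<=` C := chain_subset_diff ch IC ID Cw nDw.
have ZC : Z `<=` C.
  case: (ch IZ IC) => // CZ; have : ((C `\` D) `&` Z) w by split => //; exact: CZ.
  by rewrite CDZ.
have ZD : Z `<=` D.
  move=> z Zz; apply: contrapT => nDz.
  have : ((C `\` D) `&` Z) z by split => //; split => //; exact: ZC.
  by rewrite CDZ.
have := sub (measurableU _ _ (measurableD (mI IC) (mI ID)) (mI IZ)) (mI ID).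
rewrite (extremal_setD ch ext) // lee_fin.
rewrite (_ : _ `|` D = C); last first.
  apply/seteqP; split => [x [[[]//|/ZD/DC]|/DC] //|x Cx].
  by have [Dx|nDx] := pselect (D x); [right|left; left].
rewrite (_ : _ `&` D = Z); first lra.
apply/seteqP; split => [x [[[]//|//] _]|x Zx]; split; [by right|exact: ZD].
Qed.

Lemma remove_intervals_submodular_bound m C D Z : I C -> I D -> I Z ->
  remove_intervals m C D `&` Z = set0 ->
  (mu (remove_intervals m C D) <= (v (remove_intervals m C D `|` Z) - v Z)%:E)%E.
Proof.
elim: m C D Z => [|m IH] C D Z IC ID IZ WZ.
  by move: WZ; rewrite !remove_intervals0; exact: setD_submodular_bound.
set W := remove_intervals m.+1 C D.
set W1 := remove_intervals m C (D `|` P m).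
set W2 := remove_intervals m (C `&` Q m) D.
have WE : W = W1 `|` W2 := remove_intervalsS m C D.
have W1Q : W1 `&` Q m = set0.
  by apply/seteqP; split => // x [/remove_intervalsE [_ nDPx _] /QP Pmx]; apply: nDPx; right.
have W2Q : W2 `<=` Q m by move=> x /remove_intervalsE [[]].
have W2W : W2 `<=` W by rewrite WE; exact: subsetUr.
have W2Z : W2 `&` Z = set0.
  by apply/seteqP; split => // x [/W2W Wx Zx]; rewrite -WZ.
have mW1 : measurable W1 by apply: remove_intervals_measurable => //; exact: chain_setU.
have mW2 : measurable W2 by apply: remove_intervals_measurable => //; exact: chain_setI.
case: (ch IZ (IQ m)) => [ZQ|QZ]; last first.
  have W20 : W2 = set0.
    by apply/seteqP; split => // x W2x; rewrite -W2Z; split => //; exact/QZ/W2Q.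
  rewrite WE W20 setU0; apply: IH => //; first exact: chain_setU.
  by move: WZ; rewrite -/W WE W20 setU0.
have IH1 := IH C (D `|` P m) (Q m) IC (chain_setU ch ID (IP m)) (IQ m) W1Q.
have IH2 := IH (C `&` Q m) D Z (chain_setI ch IC (IQ m)) ID IZ W2Z.
have mWZ : measurable (W `|` Z).
  by rewrite WE; apply: measurableU; [exact: measurableU|exact: mI].
have := sub mWZ (mI (IQ m)).
rewrite (_ : W `|` Z `|` Q m = W1 `|` Q m); last first.
  by rewrite WE -!setUA (setUidr ZQ) (setUidr W2Q).
rewrite (_ : (W `|` Z) `&` Q m = W2 `|` Z); last first.
  by rewrite WE !setIUl W1Q set0U (setIidl W2Q) (setIidl ZQ).
rewrite WE measureU //; last by apply/seteqP; split => // x [W1x /W2Q Qx]; rewrite -W1Q.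
move=> sub_ineq; apply: le_trans (leeD IH1 IH2) _.
by rewrite -EFinD lee_fin; lra.
Qed.

End removed_intervals.

Section extremal_le.
Context {d : measure_display} {T : measurableType d} {R : realType}.
Variables (v : set T -> R) (c : Sigma_chain T) (mu : {measure set T -> \bar R}).
Hypotheses (mono : nondecreasing_sf v) (cont : continuous_sf v) (v0 : v set0 = 0)
  (sub : submodular_sf v) (ext : extremal_measure v (chain_sets c) mu).
Local Notation I := (chain_sets c).
Let ch : chain I := chain_sets_chain (c := c).
Let mI : I `<=` measurable := chain_sets_measurable (c := c).

Lemma extremal_le_compl_bigcup (A : nat -> set T) :
  (forall k, chain_interval c (A k)) ->
  (mu (~` \bigcup_k A k) <= (v (~` \bigcup_k A k))%:E)%E.
Proof.
move=> ivlA; have /choice [CD CDP] : forall k, exists CD : set T * set T,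
    [/\ I CD.1, I CD.2 & A k = CD.1 `\` CD.2].
  by move=> k; have [C IC [D ID <-]] := ivlA k; exists (C, D).
pose P k := (CD k).1; pose Q k := (CD k).1 `&` (CD k).2.
have IP k : I (P k) by case: (CDP k).
have IQ k : I (Q k) by case: (CDP k) => IC ID _; exact: chain_setI.
have QP k : Q k `<=` P k by exact: subIsetl.
have AE : A = fun k => P k `\` Q k.
  by apply/funext => k; case: (CDP k) => _ _ ->; exact: setD_setI.
pose K n := remove_intervals P Q n setT set0.
have mK n : measurable (K n).
  exact: (remove_intervals_measurable mI IP IQ n (chain_setsT c) (chain_sets0 c)).
have K_dec n : K n.+1 `<=` K n by exact: remove_intervals_subS.
have KE : \bigcap_n K n = ~` \bigcup_k A k.
  by rewrite bigcap_remove_intervals setD0 setTD AE.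
have muK n : (mu (K n) <= (v (K n))%:E)%E.
  have := remove_intervals_submodular_bound sub ch mI ext IP IQ QP (m := n)
    (chain_setsT c) (chain_sets0 c) (chain_sets0 c) (setI0 _).
  by rewrite setU0 v0 subr0.
have mu_cvg : mu \o K @ \oo --> mu (\bigcap_n K n).
  apply: nonincreasing_cvg_mu => //; first exact: (extremal_lty v0 ext (mK 0%N)).
    exact: bigcapT_measurable.
  by apply/nonincreasing_seqP => n; rewrite subsetEset; exact: K_dec.
have v_cvg : (fun n => (v (K n))%:E) @ \oo --> (v (\bigcap_n K n))%:E.
  apply: cvg_EFin; first by apply: nearW.
  by apply: continuous_sf_decreasing => //; exists I; exact: chain_setsP.
rewrite -KE; apply: (lee_cvg_to mu_cvg v_cvg).
by apply: nearW => n; exact: muK.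
Qed.

Lemma extremal_le B : measurable B -> (mu B <= (v B)%:E)%E.
Proof.
move=> mB; apply/lee_addgt0Pr => e e0.
have [A [ivlA BA muA]] := extremal_outer_regular mono cont v0 ext (measurableC mB) e0.
have mA k : measurable (A k) by exact: chain_interval_measurable.
set U := \bigcup_k A k; have mU : measurable U by exact: bigcupT_measurable.
have mUc : measurable (~` U) by exact: measurableC.
have UB : ~` U `<=` B by move=> x nUx; apply: contrapT => /BA.
have mBc : measurable (~` B) by exact: measurableC.
have finBc : mu (~` B) \is a fin_num by rewrite ge0_fin_numE // (extremal_lty v0 ext).
have muUB : (mu (U `\` ~` B) <= e%:E)%E.
  rewrite measureD ?(extremal_lty v0 ext) ?(setIidr BA) //.
  by apply/ltW; rewrite lteBlDl.
apply: (@le_trans _ _ (mu (~` U `|` (U `\` ~` B)))).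
  apply: le_measure; rewrite ?inE //.
    by apply: measurableU => //; exact: measurableD.
  by move=> x Bx; have [Ux|nUx] := pselect (U x); [right; split|left].
apply: le_trans (measureU2 _ _ _) _ => //; first exact: measurableD.
apply: leeD muUB; apply: le_trans (extremal_le_compl_bigcup ivlA) _.
by rewrite lee_fin; apply: mono.
Qed.

End extremal_le.

Section modularity.
Context {d : measure_display} {T : measurableType d} {R : realType}.
Variable mu : {measure set T -> \bar R}.

Lemma measureUI A B : measurable A -> measurable B ->
  (mu (A `|` B) + mu (A `&` B) = mu A + mu B)%E.
Proof.
move=> mA mB; rewrite (measureDI mu mB mA) setIC.
have -> : A `|` B = A `|` (B `\` A) by rewrite setUDr setDv setD0.
rewrite measureU ?addeA //; first exact: measurableD.
by rewrite setDE setICA setICr setI0.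
Qed.

Lemma submodular_of_measure (v : set T -> R) A B e : measurable A -> measurable B ->
  ((v (A `|` B))%:E <= mu (A `|` B))%E -> ((v (A `&` B))%:E <= mu (A `&` B) + e%:E)%E ->
  (mu A <= (v A)%:E)%E -> (mu B <= (v B)%:E)%E ->
  v (A `|` B) + v (A `&` B) <= v A + v B + e.
Proof.
move=> mA mB leU leI leA leB; rewrite -lee_fin !EFinD.
apply: le_trans (leeD leU leI) _.
by rewrite addeA measureUI //; exact: leeD (leeD leA leB) (lexx _).
Qed.

End modularity.

Section equivalences.
Context {d : measure_display} {T : measurableType d} {R : realType}.
Variable v : set T -> R.
Hypotheses (hS : exists I : set (set T), in_Sigma I) (mono : nondecreasing_sf v)
  (cont : continuous_sf v) (v0 : v set0 = 0).

Lemma Sigma_nested A B C : measurable A -> measurable B -> measurable C ->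
  B `<=` A -> C `<=` B -> exists I : set (set T), [/\ in_Sigma I, I A, I B & I C].
Proof.
move=> mA mB mC BA CB; pose K n := match n with 0 => A | 1 => B | _ => C end.
have [|n|I [IS IK _]] := @Sigma_decreasing _ _ K hS; first by case=> [|[|n]].
  by case: n => [|[|n]].
by exists I; split => //; [exact: (IK 0%N)|exact: (IK 1%N)|exact: (IK 2%N)].
Qed.

Lemma extremal_SigmaE I mu C : in_Sigma I -> extremal_measure v I mu -> I C ->
  mu C = (v C)%:E.
Proof. by move=> [_ ch I0 _ _] ext; exact: (extremal_chainE ch ext I0 v0). Qed.

Lemma submodular_core : submodular_sf v -> forall I mu, in_Sigma I ->
  extremal_measure v I mu -> core_minus v setT mu.
Proof.
move=> sub I mu IS ext; split.
- by rewrite setCT measure0.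
- by have [_ _ _ IT _] := IS; exact: extremal_SigmaE IS ext IT.
- by move=> B mB _; exact: (extremal_le (c := SigmaChain IS)) mono cont v0 sub ext B mB.
Qed.

Lemma core_submodular : (forall I mu, in_Sigma I -> extremal_measure v I mu ->
  core_minus v setT mu) -> submodular_sf v.
Proof.
move=> core A B mA mB; rewrite -[X in _ <= X]addr0.
have mU := measurableU _ _ mA mB; have mI := measurableI _ _ mA mB.
have [I [IS IU IA II]] := Sigma_nested mU mA mI (@subsetUl _ A B) (@subIsetl _ A B).
have [mu ext] := extremal_exists (SigmaChain IS) mono cont; have [_ _ leB] := core I mu IS ext.
apply: (submodular_of_measure (mu := mu)) => //.
- by rewrite (extremal_SigmaE IS ext IU).
- by rewrite (extremal_SigmaE IS ext II) adde0.
- by rewrite (extremal_SigmaE IS ext IA).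
- exact: leB.
Qed.

Lemma submodular_sup_extremal : submodular_sf v -> forall A, measurable A ->
  (v A)%:E = ereal_sup [set mu A | mu in
     [set mu : {measure set T -> \bar R} | exists I, in_Sigma I /\ extremal_measure v I mu]].
Proof.
move=> sub A mA; apply/eqP; rewrite eq_le; apply/andP; split.
  have [I [IS IA _ _]] := Sigma_nested mA mA mA (@subset_refl _ A) (@subset_refl _ A).
  have [mu ext] := extremal_exists (SigmaChain IS) mono cont.
  rewrite -(extremal_SigmaE IS ext IA).
  by apply: ereal_sup_ubound; exists mu => //; exists I.
apply: ge_ereal_sup => _ [mu [I [IS ext]] <-].
exact: (extremal_le (c := SigmaChain IS)) mono cont v0 sub ext A mA.
Qed.

Lemma sup_extremal_core : (forall A, measurable A ->
  (v A)%:E = ereal_sup [set mu A | mu in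
     [set mu : {measure set T -> \bar R} | exists I, in_Sigma I /\ extremal_measure v I mu]]) ->
  forall I mu, in_Sigma I -> extremal_measure v I mu -> core_minus v setT mu.
Proof.
move=> sup I mu IS ext; split.
- by rewrite setCT measure0.
- by have [_ _ _ IT _] := IS; exact: extremal_SigmaE IS ext IT.
- by move=> B mB _; rewrite sup //; apply: ereal_sup_ubound; exists mu => //; exists I.
Qed.

Lemma submodular_sup_core : submodular_sf v -> forall A B, measurable A -> measurable B ->
  B `<=` A -> (v B)%:E = ereal_sup [set mu B | mu in core_minus v A].
Proof.
move=> sub A B mA mB BA; apply/eqP; rewrite eq_le; apply/andP; split; last first.
  by apply: ge_ereal_sup => _ [mu [_ _ le_v] <-]; exact: le_v.
have [I [IS IA IB _]] := Sigma_nested mA mB mB BA (@subset_refl _ B).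
have [mu ext] := extremal_exists (SigmaChain IS) mono cont.
rewrite -(extremal_SigmaE IS ext IB).
apply: ereal_sup_ubound; exists (mrestr mu mA); last first.
  by change (mu (B `&` A) = mu B); rewrite setIidl.
split.
- by change (mu (~` A `&` A) = 0%E); rewrite setICl measure0.
- by change (mu (A `&` A) = (v A)%:E); rewrite setIid (extremal_SigmaE IS ext IA).
- move=> C mC CA; change (mu (C `&` A) <= (v C)%:E)%E; rewrite (setIidl CA).
  exact: (extremal_le (c := SigmaChain IS)) mono cont v0 sub ext C mC.
Qed.

Lemma sup_core_submodular : (forall A B, measurable A -> measurable B -> B `<=` A ->
  (v B)%:E = ereal_sup [set mu B | mu in core_minus v A]) -> submodular_sf v.
Proof.
move=> sup A B mA mB; have mU := measurableU _ _ mA mB.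
have mI := measurableI _ _ mA mB; have IU : A `&` B `<=` A `|` B by move=> x [Ax _]; left.
apply/ler_addgt0Pr => e e0.
have : ((v (A `&` B) - e)%:E < ereal_sup [set mu (A `&` B) | mu in core_minus v (A `|` B)])%E.
  by rewrite -sup // lte_fin gtrBl.
move=> /ereal_sup_gt [_ [mu [_ muU le_v] <-] lt_mu].
apply: (submodular_of_measure (mu := mu)) => //.
- by rewrite muU.
- by apply: ltW; rewrite -lteBlDr // -EFinB.
- by apply: le_v => //; exact: subsetUl.
- by apply: le_v => //; exact: subsetUr.
Qed.

End equivalences.

Theorem theorem7 (d : measure_display) (T : measurableType d) (R : realType)
  (v : set T -> R) :
  (exists I : set (set T), in_Sigma I) ->
  nondecreasing_sf v -> continuous_sf v -> v set0 = 0 ->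
  [/\ submodular_sf v <->
        (forall I mu, in_Sigma I -> extremal_measure v I mu ->
           core_minus v setT mu),
      submodular_sf v <->
        (forall A, measurable A ->
           (v A)%:E = ereal_sup [set mu A | mu in
              [set mu : {measure set T -> \bar R} |
                 exists I, in_Sigma I /\ extremal_measure v I mu]]) &
      submodular_sf v <->
        (forall A B, measurable A -> measurable B -> B `<=` A ->
           (v B)%:E = ereal_sup [set mu B | mu in core_minus v A])].
Proof.
move=> hS mono cont v0; split; split.
- exact: submodular_core.
- exact: core_submodular.
- exact: submodular_sup_extremal.
- by move=> sup; apply: core_submodular => //; exact: sup_extremal_core.
- exact: submodular_sup_core.
- exact: sup_core_submodular.
Qed.
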